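(* Let $C$ be an essentially finite decomposition, isomorphism filling category and $R$ a commutative $\mathbb{Q}$-algebra. An element $\alpha$ of the convolution algebra $([\overline{C}_1,R],\star)$ is invertible if and only if $\alpha(\overline{1}_x)$ is a unit of $R$ for every object $x$. In particular the map $\xi$ constantly equal to $1$ is invertible; its inverse $\mu$ satisfies $\mu(\overline{f})=1$ if $f$ is an isomorphism and, if $f$ is not an isomorphism, $$\mu(\overline{f})=\sum_{n\ge1}(-1)^n\big|\overline{\mathrm{PD}}_n\overline{f}\big|.$$
   Context: Two morphisms $f:x\to y$, $g:z\to w$ are isomorphic if there are isomorphisms $\alpha,\beta$ with $g\alpha=\beta f$; $\overline{f}$ is the class, $\overline{C}_1$ the set of classes. An $n$-decomposition of $\overline{f}$ is a tuple $(f_1,\dots,f_n)$ of composable morphisms with $f_n\cdots f_1=\beta^{-1}f\alpha$ for isomorphisms $\alpha,\beta$; isomorphisms of decompositions are families of isomorphisms between the intermediate objects making all squares commute; $\overline{\mathrm{D}}_n\overline{f}$ is the set of isomorphism classes. For $n\ge2$, $\overline{\mathrm{PD}}_n\overline{f}$ is the set of classes of decompositions with no $f_i$ an isomorphism, and $\overline{\mathrm{PD}}_1\overline{f}=\overline{\mathrm{D}}_1\overline{f}$. $C$ is an essentially finite decomposition category if $\bigsqcup_n\overline{\mathrm{PD}}_n\overline{f}$ is finite for all $\overline f$. $C$ is isomorphism filling if for any commutative square $x\to y_1\to y$, $x\to y_2\to y$ with $y_1\cong y_2$ there is an isomorphism $y_1\to y_2$ making both triangles commute. The convolution product is $(\alpha\star\beta)(\overline{f})=\sum_{\overline{(f_1,f_2)}\in\overline{\mathrm{D}}_2\overline{f}}\alpha(\overline{f}_1)\beta(\overline{f}_2)$.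 *)

From HB Require Import structures.
From mathcomp Require Import all_boot all_order all_algebra.
From Stdlib Require Import ClassicalEpsilon.
Set Implicit Arguments. Unset Strict Implicit. Unset Printing Implicit Defensive.
Import GRing.Theory.
Local Open Scope ring_scope.

(** * Categories (strict: hom-sets are types, Leibniz equality of morphisms).
    [comp g f] is g ∘ f. *)
Record category := Category {
  Ob : Type;
  Hom : Ob -> Ob -> Type;
  idm : forall x, Hom x x;
  comp : forall x y z, Hom y z -> Hom x y -> Hom x z;
  comp_idl : forall x y (f : Hom x y), comp (idm y) f = f;
  comp_idr : forall x y (f : Hom x y), comp f (idm x) = f;
  comp_assoc : forall x y z w (h : Hom z w) (g : Hom y z) (f : Hom x y),
      comp h (comp g f) = comp (comp h g) f }.
Arguments idm {c} x.
Arguments comp {c x y z} _ _.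
Arguments Hom {c} _ _.

Section Cat.
Variable C : category.

Definition is_iso (x y : Ob C) (f : Hom x y) : Prop :=
  exists g : Hom y x, comp g f = idm x /\ comp f g = idm y.

Record Arr := mkArr { src : Ob C; tgt : Ob C; mor : Hom src tgt }.

(** Isomorphism of morphisms: g a = b f with a, b isomorphisms.
    The set of classes \overline{C}_1 is the quotient of [Arr] by [arr_iso]. *)
Definition arr_iso (f g : Arr) : Prop :=
  exists (a : Hom (src f) (src g)) (b : Hom (tgt f) (tgt g)),
    is_iso a /\ is_iso b /\ comp (mor g) a = comp b (mor f).

Definition arr_is_iso (f : Arr) : Prop := is_iso (mor f).

Inductive path : Ob C -> Ob C -> Type :=
| pnil : forall x, path x x
| pcons : forall x y z, Hom x y -> path y z -> path x z.

Fixpoint plen x y (p : path x y) : nat :=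
  match p with pnil _ => 0%N | pcons _ _ _ _ q => (plen q).+1 end.

Fixpoint pcomp x y (p : path x y) : Hom x y :=
  match p in path a b return Hom a b with
  | pnil x => idm x
  | pcons _ _ _ f q => comp (pcomp q) f
  end.

Fixpoint pnoniso x y (p : path x y) : Prop :=
  match p with
  | pnil _ => True
  | pcons _ _ _ f q => ~ is_iso f /\ pnoniso q
  end.

Inductive piso : forall x y x' y', Hom x x' -> path x y -> path x' y' -> Prop :=
| piso_nil : forall x x' (a : Hom x x'), is_iso a -> piso a (pnil x) (pnil x')
| piso_cons : forall x y z x' y' z' (a : Hom x x') (b : Hom y y')
    (f : Hom x y) (p : path y z) (f' : Hom x' y') (p' : path y' z'),
    is_iso a -> comp f' a = comp b f -> piso b p p' ->
    piso a (pcons f p) (pcons f' p').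

Record Dec := mkDec { dsrc : Ob C; dtgt : Ob C; dpath : path dsrc dtgt }.

Definition dec_iso (d e : Dec) : Prop :=
  exists a : Hom (dsrc d) (dsrc e), piso a (dpath d) (dpath e).

Definition Dn (n : nat) (f : Arr) (d : Dec) : Prop :=
  plen (dpath d) = n /\ arr_iso (mkArr (pcomp (dpath d))) f.

(** proper n-decompositions: for n >= 2 no factor is an isomorphism;
    PD_1 = D_1. (Only used for n >= 1.) *)
Definition PDn (n : nat) (f : Arr) (d : Dec) : Prop :=
  Dn n f d /\ (n = 1%N \/ pnoniso (dpath d)).

Record Dec2 := mkDec2 { e0 : Ob C; e1 : Ob C; e2 : Ob C;
                        ef1 : Hom e0 e1; ef2 : Hom e1 e2 }.

Definition dec2_iso (d e : Dec2) : Prop :=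
  exists (a : Hom (e0 d) (e0 e)) (b : Hom (e1 d) (e1 e)) (c : Hom (e2 d) (e2 e)),
    [/\ is_iso a, is_iso b, is_iso c,
        comp (ef1 e) a = comp b (ef1 d) & comp (ef2 e) b = comp c (ef2 d)].

Definition D2 (f : Arr) (d : Dec2) : Prop :=
  arr_iso (mkArr (comp (ef2 d) (ef1 d))) f.

Definition fst2 (d : Dec2) : Arr := mkArr (ef1 d).
Definition snd2 (d : Dec2) : Arr := mkArr (ef2 d).

End Cat.

(** * Sets of isomorphism classes via lists of representatives *)
Fixpoint inlist (T : Type) (t : T) (s : seq T) : Prop :=
  match s with [::] => False | u :: s' => u = t \/ inlist t s' end.

Fixpoint pairwise_noniso (T : Type) (E : T -> T -> Prop) (s : seq T) : Prop :=
  match s with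
  | [::] => True
  | t :: s' => (forall u, inlist u s' -> ~ E t u) /\ pairwise_noniso E s'
  end.

Definition repr_list (T : Type) (P : T -> Prop) (E : T -> T -> Prop) (s : seq T) :=
  [/\ forall t, inlist t s -> P t,
      pairwise_noniso E s &
      forall t, P t -> exists2 u, inlist u s & E t u].

Definition nclasses (T : Type) (P : T -> Prop) (E : T -> T -> Prop) (k : nat) :=
  exists2 s, repr_list P E s & size s = k.

Definition ess_finite_decomp (C : category) : Prop :=
  forall f : Arr C, exists N : nat,
    (forall n d, (0 < n)%N -> PDn n f d -> (n <= N)%N) /\
    (forall n, (0 < n)%N -> exists s, repr_list (PDn n f) (@dec_iso C) s).

Definition iso_filling (C : category) : Prop :=
  forall (x y1 y2 y : Ob C) (a1 : Hom x y1) (b1 : Hom y1 y)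
         (a2 : Hom x y2) (b2 : Hom y2 y),
    comp b1 a1 = comp b2 a2 ->
    (exists i : Hom y1 y2, is_iso i) ->
    exists i : Hom y1 y2, [/\ is_iso i, comp i a1 = a2 & comp b2 i = b1].

(** * The convolution algebra [\overline{C}_1, R]
    Elements are functions Arr C -> R constant on isomorphism classes;
    two elements are equal iff they agree pointwise. *)
Section Conv.
Variables (C : category) (R : comUnitRingType).

Definition cls_fun (a : Arr C -> R) : Prop :=
  forall f g, arr_iso f g -> a f = a g.

Definition conv_is (a b c : Arr C -> R) : Prop :=
  forall f : Arr C, exists2 s, repr_list (@D2 C f) (@dec2_iso C) s &
    c f = \sum_(d <- s) a (fst2 d) * b (snd2 d).

Definition conv_unit (f : Arr C) : R :=
  if excluded_middle_informative (arr_is_iso f) then 1 else 0.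

Definition conv_inverse (a b : Arr C -> R) : Prop :=
  [/\ cls_fun b, conv_is a b conv_unit & conv_is b a conv_unit].

Definition conv_invertible (a : Arr C -> R) : Prop :=
  exists b, conv_inverse a b.
End Conv.

From Pilot Require Import Defs.
From HB Require Import structures.
From mathcomp Require Import all_boot all_order all_algebra.
From mathcomp Require Import ring.
From Stdlib Require Import ClassicalEpsilon Classical.
(* re-import Defs so that its names (e.g. [idm]) shadow MathComp's *)
Import Defs.
Import GRing.Theory.
Set Implicit Arguments. Unset Strict Implicit. Unset Printing Implicit Defensive.

(* Fix α, constant on isomorphism classes, with every α(1_x) a unit, and put
   u_x = α(1_x)^-1.  A chain x_0 -f_1-> ... -f_n-> x_n gets the weight
   u_{x_0} α(f_1) u_{x_1} ... α(f_n) u_{x_n}, invariant under isomorphism of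
   chains; W_n(f) is the total weight of the classes of PD_n(f).  Using
   isomorphism filling, gluing a proper m-decomposition of g and a proper
   k-decomposition of h along a proper 2-decomposition (g,h) of f is a
   bijection onto the classes of PD_{m+k}(f), whence
       W_{m+k}(f) = Σ_{(g,h) ∈ PD_2 f} W_m(g) α(1_y) W_k(h).
   Essential finiteness forces "g∘f iso ⇒ f iso" (otherwise a non-invertible
   idempotent yields arbitrarily long proper decompositions), so the
   2-decompositions of a non-isomorphism f are (1,f), (f,1) and the proper
   ones.  With these two facts, β(f) = Σ_n (-1)^n W_n(f) (and β = u on
   isomorphisms) satisfies the recursions making it a two-sided ⋆-inverse
   of α.  Right inverses are unique by induction on the length bound of
   proper decompositions, and for α = 1 every weight is 1, which gives
   μ(f) = Σ_n (-1)^n |PD_n f|.  Everything holds over any commutative ring. *)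

Section CategoryFacts.
Variable C : category.
Implicit Types x y z : Ob C.
Implicit Types f g h : Arr C.

Lemma iso_idm x : is_iso (idm x).
Proof. by exists (idm x); rewrite comp_idl. Qed.

Lemma iso_comp x y z (f : Hom x y) (g : Hom y z) :
  is_iso f -> is_iso g -> is_iso (comp g f).
Proof.
case=> fi [f1 f2] [gi [g1 g2]]; exists (comp fi gi); split.
  by rewrite comp_assoc -(comp_assoc fi) g1 comp_idr.
by rewrite comp_assoc -(comp_assoc g) f2 comp_idr.
Qed.

Lemma iso_of_inverse x y (f : Hom x y) (g : Hom y x) :
  comp g f = idm x -> comp f g = idm y -> is_iso g.
Proof. by move=> H1 H2; exists f. Qed.

Lemma comp_cancel_inv_r x y z (f : Hom x y) (fi : Hom y x) (g : Hom y z) :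
  comp f fi = idm y -> comp (comp g f) fi = g.
Proof. by move=> H; rewrite -comp_assoc H comp_idr. Qed.

Lemma comp_cancel_inv_l x y z (f : Hom y z) (fi : Hom z y) (g : Hom x y) :
  comp fi f = idm y -> comp fi (comp f g) = g.
Proof. by move=> H; rewrite comp_assoc H comp_idl. Qed.

Lemma iso_cancel_l x y z (f : Hom x y) (g : Hom y z) :
  is_iso g -> is_iso (comp g f) -> is_iso f.
Proof.
case=> gi [g1 g2] H.
rewrite -(comp_cancel_inv_l f g1); apply: iso_comp => //.
exact: iso_of_inverse g1 g2.
Qed.

Lemma iso_cancel_r x y z (f : Hom x y) (g : Hom y z) :
  is_iso f -> is_iso (comp g f) -> is_iso g.
Proof.
case=> fi [f1 f2] H.
rewrite -(comp_cancel_inv_r g f2); apply: iso_comp => //.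
exact: iso_of_inverse f1 f2.
Qed.

Lemma iso_transport x y x' y' (g : Hom x y) (g' : Hom x' y')
    (a : Hom x x') (b : Hom y y') :
  is_iso a -> is_iso b -> comp g' a = comp b g -> is_iso g -> is_iso g'.
Proof.
by move=> Ia Ib E Ig; apply: (iso_cancel_r Ia); rewrite E; exact: iso_comp.
Qed.

Lemma arr_iso_refl f : arr_iso f f.
Proof.
exists (idm (src f)), (idm (tgt f)); split; first exact: iso_idm.
by split; [exact: iso_idm | rewrite comp_idl comp_idr].
Qed.

Lemma arr_iso_sym f g : arr_iso f g -> arr_iso g f.
Proof.
case: f g => [x y f] [x' y' g] [a [b [[ai [a1 a2]] [[bi [b1 b2]] /= E]]]].
exists ai, bi; split; first exact: iso_of_inverse a1 a2.
split; first exact: iso_of_inverse b1 b2.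
rewrite /= -(comp_cancel_inv_l f b1) -E.
by rewrite -comp_assoc -(comp_assoc g) a2 comp_idr.
Qed.

Lemma arr_iso_trans f g h : arr_iso f g -> arr_iso g h -> arr_iso f h.
Proof.
case: f g h => [x y f] [x' y' g] [x'' y'' h] [a [b [Ia [Ib /= E]]]]
  [a' [b' [Ia' [Ib' /= E']]]].
exists (comp a' a), (comp b' b); split; first exact: iso_comp.
split; first exact: iso_comp.
by rewrite /= comp_assoc E' -comp_assoc E comp_assoc.
Qed.

Lemma arr_iso_is_iso f g : arr_iso f g -> arr_is_iso f -> arr_is_iso g.
Proof. by case: f g => [x y f] [x' y' g] [a [b [Ia [Ib E]]]]; exact: iso_transport E. Qed.

Lemma arr_iso_src f g : arr_iso f g -> exists i : Hom (src f) (src g), is_iso i.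
Proof. by case=> a [b [Ia _]]; exists a. Qed.

Lemma arr_iso_tgt f g : arr_iso f g -> exists i : Hom (tgt f) (tgt g), is_iso i.
Proof. by case=> a [b [_ [Ib _]]]; exists b. Qed.

Lemma mkArr_eta f : mkArr (mor f) = f.
Proof. by case: f. Qed.

Lemma arr_iso_precomp x y z (f : Hom y z) (h : Hom x y) :
  is_iso h -> arr_iso (mkArr (comp f h)) (mkArr f).
Proof.
move=> Ih; exists h, (idm _); split=> //; split; first exact: iso_idm.
by rewrite /= comp_idl.
Qed.

Lemma arr_iso_idm x y : (exists i : Hom x y, is_iso i) ->
  arr_iso (mkArr (idm x)) (mkArr (idm y)).
Proof.
case=> i Ii; exists i, i; split=> //; split=> //.
by rewrite /= comp_idl comp_idr.
Qed.

End CategoryFacts.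

Section Chains.
Variable C : category.
Implicit Types x y z : Ob C.

Fixpoint papp x y z (p : path x y) {struct p} : path y z -> path x z :=
  match p in @path _ a b return path b z -> path a z with
  | pnil _ => fun q => q
  | pcons a0 b0 c0 f p' => fun q : path c0 z => pcons f (@papp b0 c0 z p' q)
  end.

Lemma plen_papp x y z (p : path x y) (q : path y z) :
  plen (papp p q) = (plen p + plen q)%N.
Proof. by elim: p q => //= a b c f p IH q; rewrite IH. Qed.

Lemma pcomp_papp x y z (p : path x y) (q : path y z) :
  pcomp (papp p q) = comp (pcomp q) (pcomp p).
Proof.
elim: p q => [a|a b c f p IH] q /=; first by rewrite comp_idr.
by rewrite IH comp_assoc.
Qed.

Lemma pnoniso_papp x y z (p : path x y) (q : path y z) :
  pnoniso p -> pnoniso q -> pnoniso (papp p q).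
Proof. by elim: p q => //= a b c f p IH q [H1 H2] Hq; split=> //; apply: IH. Qed.

Lemma pnoniso_papp_inv x y z (p : path x y) (q : path y z) :
  pnoniso (papp p q) -> pnoniso p /\ pnoniso q.
Proof.
by elim: p q => //= a b c f p IH q [Hf /IH [H1 H2]].
Qed.

Lemma path_split x y (p : path x y) m : (m <= plen p)%N ->
  exists w (p1 : path x w) (p2 : path w y), p = papp p1 p2 /\ plen p1 = m.
Proof.
elim: p m => [x0|x0 y0 z0 f q IH] m.
  by rewrite leqn0 => /eqP ->; exists x0, (pnil x0), (pnil x0).
case: m => [|m] Hm; first by exists x0, (pnil x0), (pcons f q).
have [w [p1 [p2 [-> Hl]]]] := IH m Hm.
by exists w, (pcons f p1), p2; rewrite /= Hl.
Qed.

(* [chain_iso p a e p']: an isomorphism of chains starting with [a] and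
   ending with [e]; unlike [piso] it records the last component, which is
   what concatenation and splitting of chain isomorphisms need. *)
Fixpoint chain_iso x y (p : path x y) {struct p} :
  forall x' y', Hom x x' -> Hom y y' -> path x' y' -> Prop :=
  match p in @path _ x0 y0
    return forall x' y', Hom x0 x' -> Hom y0 y' -> path x' y' -> Prop with
  | pnil x0 => fun x' y' a e p' =>
      match p' in @path _ x1 y1 return Hom x0 x1 -> Hom x0 y1 -> Prop with
      | pnil _ => fun a e => is_iso a /\ a = e
      | pcons _ _ _ _ _ => fun _ _ => False
      end a e
  | pcons x0 y0 z0 f q => fun x' z' a e p' =>
      match p' in @path _ x1 z1 return Hom x0 x1 -> Hom z0 z1 -> Prop with
      | pnil _ => fun _ _ => False
      | pcons x1 y1 z1 f' q' => fun a e =>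
          is_iso a /\ exists b : Hom y0 y1, comp f' a = comp b f /\ chain_iso q b e q'
      end a e
  end.

Lemma piso_chain_iso x y x' y' (a : Hom x x') (p : path x y) (p' : path x' y') :
  piso a p p' -> exists e, chain_iso p a e p'.
Proof.
elim=> {x y x' y' a p p'} [x x' a Ia|x y z x' y' z' a b f p f' p' Ia E _ [e He]].
  by exists a.
by exists e; split=> //; exists b.
Qed.

Lemma chain_iso_piso x y (p : path x y) x' y' (a : Hom x x') e (p' : path x' y') :
  chain_iso p a e p' -> piso a p p'.
Proof.
elim: p x' y' a e p' => [x0|x0 y0 z0 f q IH] x' y' a e p'; case: p' a e => //=.
  by move=> x1 a e [Ia _]; constructor.
by move=> x1 y1 z1 f' q' a e [Ia [b [E H]]]; econstructor; eauto.
Qed.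

Lemma chain_iso_start x y (p : path x y) x' y' (a : Hom x x') e (p' : path x' y') :
  chain_iso p a e p' -> is_iso a.
Proof. by case: p a e => [x0|x0 y0 z0 f q] a e; case: p' a e => //= > []. Qed.

Lemma chain_iso_end x y (p : path x y) x' y' (a : Hom x x') e (p' : path x' y') :
  chain_iso p a e p' -> is_iso e.
Proof.
elim: p x' y' a e p' => [x0|x0 y0 z0 f q IH] x' y' a e p'; case: p' a e => //=.
  by move=> x1 a e [Ia <-].
by move=> x1 y1 z1 f' q' a e [_ [b [_ /IH]]].
Qed.

Lemma chain_iso_comp x y (p : path x y) x' y' (a : Hom x x') e (p' : path x' y') :
  chain_iso p a e p' -> comp (pcomp p') a = comp e (pcomp p).
Proof.
elim: p x' y' a e p' => [x0|x0 y0 z0 f q IH] x' y' a e p'; case: p' a e => //=.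
  by move=> x1 a e [_ <-]; rewrite comp_idl comp_idr.
move=> x1 y1 z1 f' q' a e [_ [b [E /IH H]]].
by rewrite -comp_assoc E comp_assoc H comp_assoc.
Qed.

Lemma chain_iso_refl x y (p : path x y) : chain_iso p (idm x) (idm y) p.
Proof.
elim: p => [x0|x0 y0 z0 f q IH] /=; first by split=> //; exact: iso_idm.
split; first exact: iso_idm.
by exists (idm y0); rewrite comp_idl comp_idr.
Qed.

Lemma chain_iso_sym x y (p : path x y) x' y' (a : Hom x x') e (p' : path x' y')
    (ai : Hom x' x) :
  chain_iso p a e p' -> comp ai a = idm x -> comp a ai = idm x' ->
  exists ei, chain_iso p' ai ei p.
Proof.
elim: p x' y' a e p' ai => [x0|x0 y0 z0 f q IH] x' y' a e p'; case: p' a e => //=.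
  move=> x1 a e ai [Ia _] H1 H2; exists ai; split=> //; exact: iso_of_inverse H1 H2.
move=> x1 y1 z1 f' q' a e ai [Ia [b [E H]]] H1 H2.
have [bi [b1 b2]] := chain_iso_start H.
have [ei Hei] := IH _ _ _ _ _ bi H b1 b2.
exists ei; split; first exact: iso_of_inverse H1 H2.
exists bi; split=> //.
rewrite -(comp_cancel_inv_l f b1) -E.
by rewrite -comp_assoc -(comp_assoc f') H2 comp_idr.
Qed.

Lemma chain_iso_trans x y (p : path x y) x' y' (a : Hom x x') e (p' : path x' y')
    x'' y'' (a' : Hom x' x'') e' (p'' : path x'' y'') :
  chain_iso p a e p' -> chain_iso p' a' e' p'' ->
  chain_iso p (comp a' a) (comp e' e) p''.
Proof.
elim: p x' y' a e p' x'' y'' a' e' p'' => [x0|x0 y0 z0 f q IH] x' y' a e p';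
  case: p' a e => //=.
  move=> x1 a e x'' y'' a' e' p''; case: p'' a' e' => //= x2 a' e' [Ia <-] [Ia' <-].
  by split=> //; exact: iso_comp.
move=> x1 y1 z1 f' q' a e x'' y'' a' e' p''; case: p'' a' e' => //=.
move=> x2 y2 z2 f'' q'' a' e' [Ia [b [E H]]] [Ia' [b' [E' H']]].
split; first exact: iso_comp.
exists (comp b' b); split; last exact: IH H H'.
by rewrite comp_assoc E' -comp_assoc E comp_assoc.
Qed.

Lemma chain_iso_app x y z (p : path x y) (q : path y z) x' y' z'
    (p' : path x' y') (q' : path y' z') (a : Hom x x') b e :
  chain_iso p a b p' -> chain_iso q b e q' -> chain_iso (papp p q) a e (papp p' q').
Proof.
elim: p q x' y' z' p' q' a b e => [x0|x0 y0 z0 f r IH] q x' y' z' p';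
  case: p' => //=.
  by move=> x1 q' a b e [Ia <-].
move=> x1 y1 z1 f' r' q' a b e [Ia [c [E H]]] Hq.
by split=> //; exists c; split=> //; exact: IH H Hq.
Qed.

Lemma chain_iso_split x y z (p : path x y) (q : path y z) x' y' z'
    (p' : path x' y') (q' : path y' z') (a : Hom x x') e :
  plen p = plen p' -> chain_iso (papp p q) a e (papp p' q') ->
  exists b, chain_iso p a b p' /\ chain_iso q b e q'.
Proof.
elim: p q x' y' z' p' q' a e => [x0|x0 y0 z0 f r IH] q x' y' z' p';
  case: p' => //=.
  move=> x1 q' a e _ H; exists a; do 2!split=> //; exact: chain_iso_start H.
move=> x1 y1 z1 f' r' q' a e [Hl] [Ia [c [E /(IH _ _ _ _ _ _ _ _ Hl) [b [H1 H2]]]]].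
by exists b; do 2!split=> //; exists c.
Qed.

Definition pre x y z (h : Hom x y) (p : path y z) : path x z :=
  match p in @path _ a b return Hom x a -> path x b with
  | pnil _ => fun h => pcons h (pnil _)
  | pcons _ _ _ f q => fun h => pcons (comp f h) q
  end h.

Lemma pcomp_pre x y z (h : Hom x y) (p : path y z) :
  pcomp (pre h p) = comp (pcomp p) h.
Proof. by case: p h => [y0|y0 w0 z0 f q] h /=; rewrite ?comp_assoc. Qed.

Lemma plen_pre x y z (h : Hom x y) (p : path y z) :
  (0 < plen p)%N -> plen (pre h p) = plen p.
Proof. by case: p h. Qed.

Lemma pnoniso_pre x y z (h : Hom x y) (p : path y z) :
  is_iso h -> (0 < plen p)%N -> pnoniso p -> pnoniso (pre h p).
Proof.
case: p h => //= y0 w0 z0 f q h Ih _ [Hf Hq]; split=> // H.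
by apply: Hf; exact: iso_cancel_r H.
Qed.

Lemma chain_iso_pre x y z (h : Hom x y) (p : path y z) :
  is_iso h -> (0 < plen p)%N -> exists e, chain_iso (pre h p) h e p.
Proof.
case: p h => //= y0 w0 z0 f q h Ih _.
exists (idm _); split=> //; exists (idm _); split; first by rewrite comp_idl.
exact: chain_iso_refl.
Qed.

Lemma pcomp_noniso x y (p : path x y) :
  (forall x y z (f : Hom x y) (g : Hom y z), is_iso (comp g f) -> is_iso f) ->
  (0 < plen p)%N -> pnoniso p -> ~ is_iso (pcomp p).
Proof. by case: p => //= x0 y0 z0 f q NI _ [Hf _] /NI. Qed.

End Chains.

Lemma chain_iso_reanchor (C : category) : iso_filling C ->
  forall (x y : Ob C) (q : path x y) x' y' (d0 : Hom x x') de (q' : path x' y')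
    (s : Hom x x') (t : Hom y y'),
  chain_iso q d0 de q' -> is_iso s -> is_iso t ->
  comp (pcomp q') s = comp t (pcomp q) -> chain_iso q s t q'.
Proof.
move=> HF x y q; elim: q => [x0|x0 y0 z0 f r IH] x' y' d0 de q'; case: q' d0 de => //=.
  by move=> x1 d0 de s t _ Is It; rewrite comp_idl comp_idr.
move=> x1 y1 z1 f' r' d0 de s t [_ [b [E H]]] Is It Ec.
have [i [Ii E1 E2]] : exists i : Hom y0 y1,
    [/\ is_iso i, comp i f = comp f' s & comp (pcomp r') i = comp t (pcomp r)].
  apply: HF; last by exists b; exact: chain_iso_start H.
  by rewrite comp_assoc Ec comp_assoc.
by split=> //; exists i; split=> //; exact: IH H Ii It E2.
Qed.

Section DecompositionIsos.
Variable C : category.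
Implicit Types x y z : Ob C.
Implicit Types f g : Arr C.
Implicit Types d : Dec C.
Implicit Types D : Dec2 C.

Lemma dec_isoP d d' :
  dec_iso d d' <-> exists a e, chain_iso (dpath d) a e (dpath d').
Proof.
split; first by case=> a /piso_chain_iso [e H]; exists a, e.
by case=> a [e /chain_iso_piso H]; exists a.
Qed.

Lemma dec_iso_sym d d' : dec_iso d d' -> dec_iso d' d.
Proof.
case/dec_isoP=> a [e H]; have [ai [a1 a2]] := chain_iso_start H.
by have [ei Hi] := chain_iso_sym H a1 a2; apply/dec_isoP; exists ai, ei.
Qed.

Lemma dec_iso_trans d d' d'' : dec_iso d d' -> dec_iso d' d'' -> dec_iso d d''.
Proof.
case/dec_isoP=> a [e H] /dec_isoP [a' [e' H']].
by apply/dec_isoP; exists (comp a' a), (comp e' e); exact: chain_iso_trans H H'.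
Qed.

Lemma dec2_iso_sym D D' : dec2_iso D D' -> dec2_iso D' D.
Proof.
case: D D' => [x y z f g] [x' y' z' f' g']
  [a [b [c [[ai [a1 a2]] [bi [b1 b2]] [ci [c1 c2]] /= E1 E2]]]].
exists ai, bi, ci; split;
  [exact: iso_of_inverse a1 a2 | exact: iso_of_inverse b1 b2
  | exact: iso_of_inverse c1 c2 | |]; rewrite /=.
  rewrite -(comp_cancel_inv_l f b1) -E1.
  by rewrite -comp_assoc -(comp_assoc f') a2 comp_idr.
rewrite -(comp_cancel_inv_l g c1) -E2.
by rewrite -comp_assoc -(comp_assoc g') b2 comp_idr.
Qed.

Lemma dec2_iso_trans D D' D'' : dec2_iso D D' -> dec2_iso D' D'' -> dec2_iso D D''.
Proof.
case: D D' D'' => [x y z f g] [x' y' z' f' g'] [x'' y'' z'' f'' g'']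
  [a [b [c [Ia Ib Ic /= E1 E2]]]] [a' [b' [c' [Ia' Ib' Ic' /= E1' E2']]]].
exists (comp a' a), (comp b' b), (comp c' c); split; try exact: iso_comp.
  by rewrite /= comp_assoc E1' -comp_assoc E1 comp_assoc.
by rewrite /= comp_assoc E2' -comp_assoc E2 comp_assoc.
Qed.

Lemma dec2_iso_comp D D' : dec2_iso D D' ->
  arr_iso (mkArr (comp (ef2 D) (ef1 D))) (mkArr (comp (ef2 D') (ef1 D'))).
Proof.
case: D D' => [x y z f g] [x' y' z' f' g'] [a [b [c [Ia Ib Ic /= E1 E2]]]].
exists a, c; do 2!split=> //=.
by rewrite -comp_assoc E1 comp_assoc E2 comp_assoc.
Qed.

Lemma dec2_iso_fst D D' : dec2_iso D D' -> arr_iso (fst2 D) (fst2 D').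
Proof. by case=> a [b [c [Ia Ib Ic E1 E2]]]; exists a, b. Qed.

Lemma dec2_iso_snd D D' : dec2_iso D D' -> arr_iso (snd2 D) (snd2 D').
Proof. by case=> a [b [c [Ia Ib Ic E1 E2]]]; exists b, c. Qed.

Lemma chain_iso_dec2 x y z x' y' z' (p1 : path x y) (p2 : path y z)
    (q1 : path x' y') (q2 : path y' z') a b e :
  chain_iso p1 a b q1 -> chain_iso p2 b e q2 ->
  dec2_iso (mkDec2 (pcomp p1) (pcomp p2)) (mkDec2 (pcomp q1) (pcomp q2)).
Proof.
move=> H1 H2; exists a, b, e; split.
- exact: chain_iso_start H1.
- exact: chain_iso_start H2.
- exact: chain_iso_end H2.
- exact: chain_iso_comp H1.
- exact: chain_iso_comp H2.
Qed.

Lemma PDn_arr n f g d : arr_iso f g -> (PDn n f d <-> PDn n g d).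
Proof.
move=> Hfg; split=> -[[Hl Hi] H]; do 2!split=> //.
  exact: arr_iso_trans Hfg.
exact: arr_iso_trans (arr_iso_sym Hfg).
Qed.

End DecompositionIsos.

(* In an essentially finite decomposition category, a left factor of an
   isomorphism is an isomorphism.  Otherwise, for g∘f iso and f not, the
   idempotent e = f∘(g∘f)^-1∘g is not an isomorphism and satisfies g∘e = g, so
   f, e, ..., e, g are proper decompositions of g∘f of every length. *)
Section LeftFactor.
Variable C : category.
Hypothesis HE : ess_finite_decomp C.

Fixpoint ecat (y z : Ob C) (e : Hom y y) (k : nat) (q : path y z) : path y z :=
  match k with 0 => q | k'.+1 => pcons e (ecat e k' q) end.

Lemma iso_left_factor (x y z : Ob C) (f : Hom x y) (g : Hom y z) :
  is_iso (comp g f) -> is_iso f.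
Proof.
move=> Hu; apply: NNPP => Hf.
have [ui [u1 u2]] := Hu.
set k := comp ui g.
have Hk : comp k f = idm x by rewrite /k -comp_assoc.
set e := comp f k.
have Hee : comp e e = e by rewrite /e -comp_assoc (comp_assoc k f k) Hk comp_idl.
have Hge : comp g e = g by rewrite /e /k comp_assoc comp_assoc u2 comp_idl.
have He : ~ is_iso e.
  case=> ei [e1 e2]; apply: Hf; exists k; split=> //.
  by rewrite -/e -e1 -{2}Hee comp_assoc e1 comp_idl.
have Hg : ~ is_iso g by move=> Ig; apply: Hf; exact: iso_cancel_l Hu.
have [N [HN _]] := HE (mkArr (comp g f)).
pose P k0 := pcons f (ecat e k0 (pcons g (pnil z))).
have Hc k0 : pcomp (ecat e k0 (pcons g (pnil z))) = comp (idm z) g.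
  by elim: k0 => //= k0 ->; rewrite comp_idl Hge.
have Hpd : PDn N.+2 (mkArr (comp g f)) (mkDec (P N)).
  split; last right.
    split; first by rewrite /= /P /=; elim: (N) => //= n ->.
    by rewrite /= Hc comp_idl; exact: arr_iso_refl.
  by rewrite /P /=; split=> //; elim: (N) => //= n IH; split.
by have := HN _ _ (ltn0Sn _) Hpd => /ltnW; rewrite ltnn.
Qed.

End LeftFactor.

Local Open Scope ring_scope.

Section ListMembership.
Variable T : Type.
Implicit Types s t : seq T.

Lemma inlist_app (x : T) s t : inlist x (s ++ t) <-> inlist x s \/ inlist x t.
Proof.
elim: s => /= [|a s IH]; first by split=> [H|[]//]; right.
split; first by case=> [->|/IH [H|H]]; [left; left| left; right| right].
by case=> [[->|H]|H]; [left | right; apply/IH; left | right; apply/IH; right].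
Qed.

Lemma inlist_split (x : T) s : inlist x s -> exists s1 s2, s = s1 ++ x :: s2.
Proof.
elim: s => //= a s IH [->|/IH [s1 [s2 ->]]]; first by exists [::], s.
by exists (a :: s1), s2.
Qed.

Lemma inlist_map (U : Type) (h : U -> T) (y : T) (s : seq U) :
  inlist y (map h s) <-> exists x, inlist x s /\ y = h x.
Proof.
elim: s y => /= [|a s IH] y; first by split=> // [[x []]].
split.
  by case=> [<-|/IH [x [H ->]]]; [exists a; split=> //; left | exists x; split=> //; right].
by case=> x [[<-|H] ->]; [left | right; apply/IH; exists x].
Qed.

Lemma inlist_flatten (y : T) (ss : seq (seq T)) :
  inlist y (flatten ss) <-> exists s, inlist s ss /\ inlist y s.
Proof.
elim: ss => /= [|s ss IH]; first by split=> // [[s []]].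
rewrite inlist_app; split.
  by case=> [H|/IH [s' [H1 H2]]]; [exists s; split=> //; left | exists s'; split=> //; right].
by case=> s' [[->|H1] H2]; [left | right; apply/IH; exists s'].
Qed.

Lemma eq_big_inlist (V : zmodType) (s : seq T) (F G : T -> V) :
  (forall x, inlist x s -> F x = G x) -> \sum_(x <- s) F x = \sum_(x <- s) G x.
Proof.
elim: s => [|a s IH] H; first by rewrite !big_nil.
by rewrite !big_cons H; [rewrite IH // => x Hx; apply: H; right | left].
Qed.

Lemma leq_bigmax_inlist (s : seq T) (F : T -> nat) x : inlist x s ->
  (F x <= \max_(y <- s) F y)%N.
Proof.
elim: s => //= a s IH [<-|H]; rewrite big_cons; first exact: leq_maxl.
exact: leq_trans (IH H) (leq_maxr _ _).
Qed.

Lemma repr_list_ext (P Q : T -> Prop) (E : T -> T -> Prop) s :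
  (forall x, P x <-> Q x) -> repr_list P E s -> repr_list Q E s.
Proof.
move=> HPQ [H1 H2 H3]; split=> //; first by move=> x /H1 /HPQ.
by move=> x /HPQ /H3.
Qed.

End ListMembership.

Section Representatives.
Variable T : Type.
Implicit Types s t : seq T.
Variable E : T -> T -> Prop.
Hypothesis Es : forall x y, E x y -> E y x.
Hypothesis Et : forall x y z, E x y -> E y z -> E x z.

Lemma pw_app s t : pairwise_noniso E s -> pairwise_noniso E t ->
  (forall u v, inlist u s -> inlist v t -> ~ E u v) -> pairwise_noniso E (s ++ t).
Proof.
elim: s => //= a s IH [H1 H2] Ht Hx; split; last first.
  by apply: IH => // u v Hu Hv; apply: Hx => //; right.
move=> u /inlist_app [Hu|Hu]; first exact: H1.
by apply: Hx => //; left.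
Qed.

Lemma pw_split s1 b s2 : pairwise_noniso E (s1 ++ b :: s2) ->
  pairwise_noniso E (s1 ++ s2) /\ (forall x, inlist x (s1 ++ s2) -> ~ E b x).
Proof.
elim: s1 => /= [|a s1 IH] [H1 H2]; first by split=> // x; exact: H1.
have [IH1 IH2] := IH H2.
split.
  split=> // u Hu; apply: H1; apply/inlist_app.
  by case/inlist_app: Hu => Hu; [left | right; right].
move=> x [<-|Hx]; last exact: IH2.
by move=> /Es; apply: H1; apply/inlist_app; right; left.
Qed.

Lemma repr_list_behead (P : T -> Prop) a s :
  repr_list P E (a :: s) -> repr_list (fun x => P x /\ ~ E a x) E s.
Proof.
case=> Hs1 [Hna Hs2] Hs3; split=> //.
- by move=> x Hx; split; [apply: Hs1; right | exact: Hna].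
- move=> x [Px Nx]; have [u [<-|Hu] Exu] := Hs3 x Px; first by case: Nx; exact: Es.
  by exists u.
Qed.

Lemma repr_list_remove (P : T -> Prop) a t1 b t2 :
  E a b -> repr_list P E (t1 ++ b :: t2) ->
  repr_list (fun x => P x /\ ~ E a x) E (t1 ++ t2).
Proof.
move=> Eab [Ht1 /pw_split [Hpw Hnb] Ht3]; split=> //.
- move=> x Hx; split.
    by apply: Ht1; apply/inlist_app; case/inlist_app: Hx => Hx; [left|right; right].
  by move=> Eax; apply: (Hnb x Hx); apply: Et Eax; exact: Es.
- move=> x [Px Nx]; have [u Hu Exu] := Ht3 x Px.
  case/inlist_app: Hu => [Hu|[Hu|Hu]].
  + by exists u => //; apply/inlist_app; left.
  + by case: Nx; apply: Et Eab _; apply: Es; rewrite Hu.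
  + by exists u => //; apply/inlist_app; right.
Qed.

Lemma repr_sum (V : zmodType) (F : T -> V) :
  (forall x y, E x y -> F x = F y) ->
  forall s (P : T -> Prop) t, repr_list P E s -> repr_list P E t ->
  \sum_(x <- s) F x = \sum_(x <- t) F x.
Proof.
move=> HF; elim=> [|a s IH] P t Hs Ht.
  case: t Ht => // b t [Ht1 _ _]; have [_ _ Hs3] := Hs.
  by have [u []] := Hs3 b (Ht1 b (or_introl erefl)).
have [Hs1 _ Hs3] := Hs; have [Ht1 _ Ht3] := Ht.
have [b Hb Eab] := Ht3 a (Hs1 a (or_introl erefl)).
have [t1 [t2 Et12]] := inlist_split Hb; rewrite Et12 in Ht *.
rewrite big_cons big_cat big_cons (IH _ _ (repr_list_behead Hs) (repr_list_remove Eab Ht)).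
by rewrite big_cat (HF _ _ Eab) addrCA.
Qed.

Lemma pw_flatten (A : Type) (E' : A -> A -> Prop) (K : T -> A -> Prop)
  (L : seq A) (M : A -> seq T) :
  pairwise_noniso E' L -> (forall x, inlist x L -> pairwise_noniso E (M x)) ->
  (forall x u, inlist x L -> inlist u (M x) -> K u x) ->
  (forall u v x y, K u x -> K v y -> E u v -> E' x y) ->
  pairwise_noniso E (flatten (map M L)).
Proof.
move=> HL HM HK HKE; elim: L HL HM HK => //= x L IH [H1 H2] HM HK.
apply: pw_app.
- by apply: HM; left.
- by apply: IH => // [y Hy|y u Hy Hu]; [apply: HM; right | apply: HK => //; right].
move=> u v Hu /inlist_flatten [s [/inlist_map [y [Hy ->]] Hv]] Euv.
by apply: (H1 y Hy); apply: HKE Euv; apply: HK => //; [left | right].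
Qed.

End Representatives.

Section ChosenRepresentatives.
Variable C : category.
Hypothesis HE : ess_finite_decomp C.
Implicit Types f g : Arr C.
Implicit Types d : Dec C.
Implicit Types D : Dec2 C.

Definition PD2 f D := D2 f D /\ ~ is_iso (ef1 D) /\ ~ is_iso (ef2 D).

Definition pd_reps n f : seq (Dec C) :=
  match excluded_middle_informative
          (exists s, repr_list (PDn n f) (@dec_iso C) s) with
  | left H => proj1_sig (constructive_indefinite_description _ H)
  | right _ => [::]
  end.

Lemma pd_repsP n f : (0 < n)%N -> repr_list (PDn n f) (@dec_iso C) (pd_reps n f).
Proof.
move=> Hn; rewrite /pd_reps; case: excluded_middle_informative => [H|[]].
  exact: proj2_sig (constructive_indefinite_description _ H).
by have [N [_ H]] := HE f; apply: H.
Qed.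

Definition pd_bound f : nat :=
  proj1_sig (constructive_indefinite_description _ (HE f)).

Lemma pd_boundP f n d : (0 < n)%N -> PDn n f d -> (n <= pd_bound f)%N.
Proof.
rewrite /pd_bound; case: constructive_indefinite_description => N [H _] /=.
exact: H.
Qed.

Lemma pd_reps_mem n f d : (0 < n)%N -> inlist d (pd_reps n f) -> PDn n f d.
Proof. by move=> /(pd_repsP f) [H _ _]; exact: H. Qed.

Lemma pd_reps_big n f : (pd_bound f < n)%N -> pd_reps n f = [::].
Proof.
move=> Hn; case E: (pd_reps n f) => [//|d s].
have Hn0 : (0 < n)%N by apply: leq_ltn_trans Hn.
have [H1 _ _] := pd_repsP f Hn0.
have := pd_boundP Hn0 (H1 d ltac:(by rewrite E; left)).
by rewrite leqNgt Hn.
Qed.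

Lemma PDn_noniso n f d : (0 < n)%N -> PDn n f d -> ~ arr_is_iso f ->
  pnoniso (dpath d).
Proof.
move=> Hn [[Hl Hi] [E1|H]] Hf //; rewrite E1 in Hl.
case: d Hl Hi => x y p /=; case: p => // x0 y0 z0 f0 q; case: q f0 => // z1 f0 _ Hi.
split=> // If0; apply: Hf; apply: (arr_iso_is_iso Hi).
by rewrite /arr_is_iso /= comp_idl.
Qed.

Definition single f : Dec C := mkDec (pcons (mor f) (pnil (tgt f))).

Lemma single_repr f : repr_list (PDn 1 f) (@dec_iso C) [:: single f].
Proof.
split.
- move=> d [<-|//]; split; last by left.
  by split=> //; rewrite /= comp_idl mkArr_eta; exact: arr_iso_refl.
- by split.
move=> d [[Hl Hi] _]; exists (single f); first by left.
case: d Hl Hi => x y p /=; case: p => // x0 y0 z0 f0 q; case: q f0 => // z1 f0 _.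
move=> -[a [b [Ia [Ib E]]]]; rewrite /= comp_idl in E.
by apply/dec_isoP; exists a, b; split=> //; exists b.
Qed.

Definition dec_of2 D : Dec C := mkDec (pcons (ef1 D) (pcons (ef2 D) (pnil _))).

Lemma dec_len2 d : plen (dpath d) = 2%N -> exists D, d = dec_of2 D.
Proof.
case: d => x y p /=; case: p => // x0 y0 z0 f0 q; case: q f0 => // y1 w1 z1 f1 r f0.
by case: r f1 => // z2 f1 _; exists (mkDec2 f0 f1).
Qed.

Lemma PDn_of2 f D : PDn 2 f (dec_of2 D) <-> PD2 f D.
Proof.
rewrite /PDn /Dn /PD2 /D2 /= comp_idl; split.
  by case=> [[_ H] [//|[H1 [H2 _]]]].
by case=> H [H1 H2]; split=> //; right.
Qed.

Lemma dec_iso_of2 D D' : dec_iso (dec_of2 D) (dec_of2 D') <-> dec2_iso D D'.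
Proof.
rewrite dec_isoP; split.
  by case=> a [e /= [Ia [b [E1 [Ib [c [E2 [Ic Ece]]]]]]]]; exists a, b, c; split.
case=> a [b [c [Ia Ib Ic E1 E2]]].
by exists a, c; split=> //; exists b; split=> //; split=> //; exists c.
Qed.

Definition pd2_reps f : seq (Dec2 C) :=
  match excluded_middle_informative
          (exists s, repr_list (PD2 f) (@dec2_iso C) s) with
  | left H => proj1_sig (constructive_indefinite_description _ H)
  | right _ => [::]
  end.

Lemma pd2_repsP f : repr_list (PD2 f) (@dec2_iso C) (pd2_reps f).
Proof.
rewrite /pd2_reps; case: excluded_middle_informative => [H|[]].
  exact: proj2_sig (constructive_indefinite_description _ H).
have [H1 H2 H3] := @pd_repsP 2 f isT.
have [s Es] : exists s : seq (Dec2 C), pd_reps 2 f = map dec_of2 s.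
  have : forall d, inlist d (pd_reps 2 f) -> exists D, d = dec_of2 D.
    by move=> d /H1 [[Hl _] _]; apply: dec_len2.
  elim: (pd_reps 2 f) => [|d l IH] Hl; first by exists [::].
  have [D ->] := Hl d (or_introl erefl).
  have [s ->] := IH (fun d' H => Hl d' (or_intror H)).
  by exists (D :: s).
exists s; rewrite Es in H1 H2 H3; split.
- by move=> D HD; apply/PDn_of2/H1/inlist_map; exists D.
- elim: (s) H2 => //= D l IH [Ha Hb]; split; last exact: IH.
  by move=> D' HD' /dec_iso_of2; apply: Ha; apply/inlist_map; exists D'.
- move=> D /PDn_of2 /H3 [d /inlist_map [D' [HD' ->]] /dec_iso_of2 HDD'].
  by exists D'.
Qed.

Lemma pd2_reps_noniso f D : inlist D (pd2_reps f) ->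
  [/\ D2 f D, ~ arr_is_iso (fst2 D) & ~ arr_is_iso (snd2 D)].
Proof. by have [H _ _] := pd2_repsP f => /H [H1 [H2 H3]]. Qed.

Definition dec2_idl f : Dec2 C := mkDec2 (idm (src f)) (mor f).
Definition dec2_idr f : Dec2 C := mkDec2 (mor f) (idm (tgt f)).

Lemma D2_idl f : D2 f (dec2_idl f).
Proof. by rewrite /D2 /= comp_idr mkArr_eta; exact: arr_iso_refl. Qed.

Lemma D2_idr f : D2 f (dec2_idr f).
Proof. by rewrite /D2 /= comp_idl mkArr_eta; exact: arr_iso_refl. Qed.

Lemma dec2_iso_ef1 D D' : dec2_iso D D' -> is_iso (ef1 D) -> is_iso (ef1 D').
Proof. by case=> a [b [c [Ia Ib Ic E1 E2]]]; exact: iso_transport E1. Qed.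

Lemma dec2_iso_ef2 D D' : dec2_iso D D' -> is_iso (ef2 D) -> is_iso (ef2 D').
Proof. by case=> a [b [c [Ia Ib Ic E1 E2]]]; exact: iso_transport E2. Qed.

Lemma dec2_idl_cover f D : D2 f D -> is_iso (ef1 D) -> dec2_iso D (dec2_idl f).
Proof.
case: f => x y f; case=> /= a0 [b0 [Ia0 [Ib0 /= E]]] [gi [g1 g2]].
exists a0, (comp a0 gi), b0; split=> //=.
- by apply: iso_comp => //; exact: iso_of_inverse g1 g2.
- by rewrite comp_idl -comp_assoc g1 comp_idr.
by rewrite comp_assoc E -!comp_assoc g2 comp_idr.
Qed.

Lemma dec2_idr_cover f D : D2 f D -> is_iso (ef2 D) -> dec2_iso D (dec2_idr f).
Proof.
case: f => x y f; case=> /= a0 [b0 [Ia0 [Ib0 /= E]]] Ig.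
exists a0, (comp b0 (ef2 D)), b0; split=> //=.
- exact: iso_comp.
- by rewrite E comp_assoc.
by rewrite comp_idl.
Qed.

(* D_2(f) is {(1,f)} for an isomorphism f; otherwise it consists of (1,f),
   (f,1) and the proper 2-decompositions, by the left-factor property *)
Definition d2_reps f : seq (Dec2 C) :=
  if excluded_middle_informative (arr_is_iso f) then [:: dec2_idl f]
  else dec2_idl f :: dec2_idr f :: pd2_reps f.

Lemma d2_repsP f : repr_list (D2 f) (@dec2_iso C) (d2_reps f).
Proof.
rewrite /d2_reps; case: excluded_middle_informative => Hf.
  split; [by move=> D [<-|//]; exact: D2_idl | by [] |].
  move=> D HD; exists (dec2_idl f); first by left.
  apply: (dec2_idl_cover HD); apply: (iso_left_factor HE (g := ef2 D)).
  exact: arr_iso_is_iso (arr_iso_sym HD) Hf.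
have [L1 L2 L3] := pd2_repsP f.
split.
- by move=> D [<-|[<-|/L1 [H _]]] //; [exact: D2_idl | exact: D2_idr].
- split.
    move=> u [<-|/L1 [_ [N1 _]]] H; last exact/N1/(dec2_iso_ef1 H (iso_idm _)).
    exact/Hf/(dec2_iso_ef1 H (iso_idm _)).
  split=> // u /L1 [_ [_ N2]] H; exact/N2/(dec2_iso_ef2 H (iso_idm _)).
move=> D HD.
case: (classic (is_iso (ef1 D))) => H1.
  by exists (dec2_idl f); [left | exact: dec2_idl_cover].
case: (classic (is_iso (ef2 D))) => H2.
  by exists (dec2_idr f); [right; left | exact: dec2_idr_cover].
by have [u Hu Hdu] := L3 D (conj HD (conj H1 H2)); exists u => //; right; right.
Qed.

End ChosenRepresentatives.

Section ConvolutionSums.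
Variables (C : category) (R : comUnitRingType).
Hypothesis HE : ess_finite_decomp C.
Implicit Types f : Arr C.

Lemma conv_isE (a b c : Arr C -> R) : cls_fun a -> cls_fun b ->
  conv_is a b c <->
  forall f, c f = \sum_(D <- d2_reps f) a (fst2 D) * b (snd2 D).
Proof.
move=> Ha Hb; split=> [H f|H f]; last first.
  by exists (d2_reps f); [exact: d2_repsP | exact: H].
have [s Hs ->] := H f.
apply: (repr_sum (@dec2_iso_sym C) (@dec2_iso_trans C) _ Hs (d2_repsP HE f)).
by move=> D D' HD; rewrite (Ha _ _ (dec2_iso_fst HD)) (Hb _ _ (dec2_iso_snd HD)).
Qed.

Lemma conv_sum_iso (a b : Arr C -> R) f : arr_is_iso f ->
  \sum_(D <- d2_reps f) a (fst2 D) * b (snd2 D) = a (mkArr (idm (src f))) * b f.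
Proof.
move=> Hf; rewrite /d2_reps; case: excluded_middle_informative => // H.
by rewrite big_seq1 /dec2_idl /fst2 /snd2 /= mkArr_eta.
Qed.

Lemma conv_sum_noniso (a b : Arr C -> R) f : ~ arr_is_iso f ->
  \sum_(D <- d2_reps f) a (fst2 D) * b (snd2 D) =
  a (mkArr (idm (src f))) * b f + a f * b (mkArr (idm (tgt f))) +
  \sum_(D <- pd2_reps f) a (fst2 D) * b (snd2 D).
Proof.
move=> Hf; rewrite /d2_reps; case: excluded_middle_informative => // H.
by rewrite !big_cons addrA /dec2_idl /dec2_idr /fst2 /snd2 /= mkArr_eta.
Qed.

Lemma conv_unit_iso f : arr_is_iso f -> conv_unit R f = 1.
Proof. by rewrite /conv_unit; case: excluded_middle_informative. Qed.

Lemma conv_unit_noniso f : ~ arr_is_iso f -> conv_unit R f = 0.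
Proof. by rewrite /conv_unit; case: excluded_middle_informative. Qed.

End ConvolutionSums.

(* Given a proper 2-decomposition D = (g, h) of f, a proper
   m-decomposition a of g and a proper k-decomposition b of h, [glue D a b]
   is the chain a followed by b, with the first factor of b precomposed by
   an isomorphism matching the middle objects.  Over representatives, gluing
   enumerates the classes of PD_{m+k}(f) exactly once; isomorphism filling
   is what makes the enumeration complete. *)
Section Gluing.
Variable C : category.
Hypothesis HE : ess_finite_decomp C.
Hypothesis HF : iso_filling C.
Implicit Types f g : Arr C.
Implicit Types d : Dec C.
Implicit Types D : Dec2 C.

Definition glue_iso D (a b : Dec C) (h : Hom (dtgt a) (dsrc b)) :=
  is_iso h /\ dec2_iso (mkDec2 (pcomp (dpath a)) (comp (pcomp (dpath b)) h)) D.
Arguments glue_iso : clear implicits.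

Definition glue D (a b : Dec C) : Dec C :=
  match excluded_middle_informative (exists h, glue_iso D a b h) with
  | left H => mkDec (papp (dpath a)
                 (pre (proj1_sig (constructive_indefinite_description _ H)) (dpath b)))
  | right _ => a
  end.

Lemma glueP D a b : (exists h, glue_iso D a b h) ->
  exists h, glue_iso D a b h /\ glue D a b = mkDec (papp (dpath a) (pre h (dpath b))).
Proof.
rewrite /glue; case: excluded_middle_informative => // H _.
by case: constructive_indefinite_description => h Hh /=; exists h.
Qed.

Lemma glue_iso_exists D a b :
  arr_iso (mkArr (pcomp (dpath a))) (fst2 D) ->
  arr_iso (mkArr (pcomp (dpath b))) (snd2 D) -> exists h, glue_iso D a b h.
Proof.
case=> /= a1 [b1 [Ia1 [Ib1 /= E1]]] [a2 [b2 [[a2i [a21 a22]] [Ib2 /= E2]]]].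
exists (comp a2i b1); split.
  by apply: iso_comp => //; exact: iso_of_inverse a21 a22.
exists a1, b1, b2; split=> //=.
by rewrite comp_assoc -E2 -comp_assoc (comp_assoc a2) a22 comp_idl.
Qed.

Definition cut_at m (c : Dec C)
    (Q : forall w, path (dsrc c) w -> path w (dtgt c) -> Prop) :=
  exists w (p1 : path (dsrc c) w) (p2 : path w (dtgt c)),
    [/\ dpath c = papp p1 p2, plen p1 = m & Q w p1 p2].
Arguments cut_at : clear implicits.

Lemma cut_at_sub m c (Q Q' : forall w, path (dsrc c) w -> path w (dtgt c) -> Prop) :
  (forall w p1 p2, Q w p1 p2 -> Q' w p1 p2) -> cut_at m c Q -> cut_at m c Q'.
Proof. by move=> HQ [w [p1 [p2 [E Hl /HQ H]]]]; exists w, p1, p2. Qed.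

Lemma cut_at_iso m u v Q Q' : cut_at m u Q -> cut_at m v Q' -> dec_iso u v ->
  exists w1 (p1 : path (dsrc u) w1) p2 w2 (q1 : path (dsrc v) w2) q2,
    [/\ Q w1 p1 p2, Q' w2 q1 q2, dec_iso (mkDec p1) (mkDec q1),
        dec_iso (mkDec p2) (mkDec q2) &
        dec2_iso (mkDec2 (pcomp p1) (pcomp p2)) (mkDec2 (pcomp q1) (pcomp q2))].
Proof.
move=> [w1 [p1 [p2 [Eu Hl HQ]]]] [w2 [q1 [q2 [Ev Hl' HQ']]]] /dec_isoP [a [e H]].
rewrite Eu Ev in H; have [b [H1 H2]] := chain_iso_split (etrans Hl (esym Hl')) H.
exists w1, p1, p2, w2, q1, q2; split=> //; last exact: chain_iso_dec2 H1 H2.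
  by apply/dec_isoP; exists a, b.
by apply/dec_isoP; exists b, e.
Qed.

Section FixedLengths.
Variables (f : Arr C) (m k : nat).
Hypotheses (Hm : (0 < m)%N) (Hk : (0 < k)%N).

Definition glue_index D a b := [/\ inlist D (pd2_reps f),
  inlist a (pd_reps m (fst2 D)) & inlist b (pd_reps k (snd2 D))].

Definition glued_reps : seq (Dec C) :=
  flatten (map (fun D => flatten (map (fun a =>
     flatten (map (fun b => [:: glue D a b]) (pd_reps k (snd2 D))))
     (pd_reps m (fst2 D)))) (pd2_reps f)).

Lemma inlist_glued_reps c : inlist c glued_reps <->
  exists D a b, glue_index D a b /\ c = glue D a b.
Proof.
rewrite /glued_reps inlist_flatten; split.
  case=> s [/inlist_map [D [HD ->]]] /inlist_flatten [s' [/inlist_map [a [Ha ->]]]].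
  case/inlist_flatten=> s'' [/inlist_map [b [Hb ->]]] [<-|//].
  by exists D, a, b.
case=> D [a [b [[HD Ha Hb] ->]]].
eexists; split; first by apply/inlist_map; exists D.
apply/inlist_flatten; eexists; split; first by apply/inlist_map; exists a.
apply/inlist_flatten; eexists; split; first by apply/inlist_map; exists b.
by left.
Qed.

Lemma glue_spec D a b : glue_index D a b ->
  exists h, [/\ is_iso h,
    dec2_iso (mkDec2 (pcomp (dpath a)) (comp (pcomp (dpath b)) h)) D &
    glue D a b = mkDec (papp (dpath a) (pre h (dpath b)))].
Proof.
move=> [HD /(pd_reps_mem HE Hm) [[_ Ha] _] /(pd_reps_mem HE Hk) [[_ Hb] _]].
by have [h [[Ih Hg] ->]] := glueP (glue_iso_exists Ha Hb); exists h.
Qed.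

Lemma glue_cut D a b : glue_index D a b ->
  cut_at m (glue D a b) (fun w p1 p2 =>
    [/\ dec2_iso (mkDec2 (pcomp p1) (pcomp p2)) D,
        dec_iso (mkDec p1) a & dec_iso (mkDec p2) b]).
Proof.
move=> HDab; have [h [Ih Hg ->]] := glue_spec HDab.
case: HDab => _ /(pd_reps_mem HE Hm) [[Hla _] _] /(pd_reps_mem HE Hk) [[Hlb _] _].
exists (dtgt a), (dpath a), (pre h (dpath b)); split=> //; split.
- by rewrite /= pcomp_pre.
- by apply/dec_isoP; exists (idm _), (idm _); exact: chain_iso_refl.
apply/dec_isoP; have [e He] := chain_iso_pre (p := dpath b) Ih (ltac:(by rewrite Hlb)).
by exists h, e.
Qed.

Lemma glued_reps_mem c : inlist c glued_reps -> PDn (m + k) f c.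
Proof.
case/inlist_glued_reps=> D [a [b [HDab ->]]].
have [h [Ih Hg ->]] := glue_spec HDab.
case: HDab => /(pd2_reps_noniso HE) [HD2 N1 N2] Ha Hb.
have [[Hla _] _] := pd_reps_mem HE Hm Ha; have [[Hlb _] _] := pd_reps_mem HE Hk Hb.
have Pa := PDn_noniso Hm (pd_reps_mem HE Hm Ha) N1.
have Pb := PDn_noniso Hk (pd_reps_mem HE Hk Hb) N2.
split; last right.
  split; first by rewrite /= plen_papp plen_pre ?Hla ?Hlb.
  rewrite /= pcomp_papp pcomp_pre.
  exact: (arr_iso_trans (dec2_iso_comp Hg) HD2).
by apply: pnoniso_papp => //; apply: pnoniso_pre => //; rewrite Hlb.
Qed.

Lemma glued_reps_pw : pairwise_noniso (@dec_iso C) glued_reps.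
Proof.
apply: (pw_flatten (E' := @dec2_iso C)
  (K := fun c D => cut_at m c (fun w p1 p2 => dec2_iso (mkDec2 (pcomp p1) (pcomp p2)) D))).
- by case: (pd2_repsP HE f).
- move=> D HD.
  apply: (pw_flatten (E' := @dec_iso C)
    (K := fun c a => cut_at m c (fun w p1 p2 => dec_iso (mkDec p1) a))).
  + by case: (pd_repsP HE (fst2 D) Hm).
  + move=> a Ha.
    apply: (pw_flatten (E' := @dec_iso C)
      (K := fun c b => cut_at m c (fun w p1 p2 => dec_iso (mkDec p2) b))).
    * by case: (pd_repsP HE (snd2 D) Hk).
    * by [].
    * move=> b u Hb [<-|//].
      by apply: cut_at_sub (glue_cut (And3 HD Ha Hb)) => w p1 p2 [].
    * move=> u v b b' Hu Hv /(cut_at_iso Hu Hv) [? [? [? [? [? [? [Hb Hb' _ H _]]]]]]].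
      exact: dec_iso_trans (dec_iso_sym Hb) (dec_iso_trans H Hb').
  + move=> a u Ha /inlist_flatten [s [/inlist_map [b [Hb ->]]] [<-|//]].
    by apply: cut_at_sub (glue_cut (And3 HD Ha Hb)) => w p1 p2 [].
  + move=> u v a a' Hu Hv /(cut_at_iso Hu Hv) [? [? [? [? [? [? [Ha Ha' H _ _]]]]]]].
    exact: dec_iso_trans (dec_iso_sym Ha) (dec_iso_trans H Ha').
- move=> D u HD /inlist_flatten [s [/inlist_map [a [Ha ->]]]].
  case/inlist_flatten=> s' [/inlist_map [b [Hb ->]]] [<-|//].
  by apply: cut_at_sub (glue_cut (And3 HD Ha Hb)) => w p1 p2 [].
- move=> u v D D' Hu Hv /(cut_at_iso Hu Hv) [? [? [? [? [? [? [HD HD' _ _ H]]]]]]].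
  exact: dec2_iso_trans (dec2_iso_sym HD) (dec2_iso_trans H HD').
Qed.

(* the re-anchoring step: a cut chain whose pieces are isomorphic to the
   data of a glued chain is isomorphic to it; isomorphism filling adjusts
   the middle isomorphism *)
Lemma glue_of_pieces D a b x w y (p1 : path x w) (p2 : path w y) :
  glue_index D a b -> dec2_iso (mkDec2 (pcomp p1) (pcomp p2)) D ->
  dec_iso (mkDec p1) a -> dec_iso (mkDec p2) b ->
  dec_iso (mkDec (papp p1 p2)) (glue D a b).
Proof.
move=> HDab HXD Hpa Hpb; have [h [Ih Hg ->]] := glue_spec HDab.
have [_ _ /(pd_reps_mem HE Hk) [[Hlb _] _]] := HDab.
have [s0 [s1 Hs]] := proj1 (dec_isoP _ _) Hpa.
have Hpb' : dec_iso (mkDec p2) (mkDec (pre h (dpath b))).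
  apply: dec_iso_trans Hpb _; apply: dec_iso_sym; apply/dec_isoP.
  have [e He] := chain_iso_pre (p := dpath b) Ih (ltac:(by rewrite Hlb)).
  by exists h, e.
have [t0 [t1 Ht]] := proj1 (dec_isoP _ _) Hpb'.
have [i0 [i1 [i2 [I0 I1 I2 /= E1 E2]]]] := dec2_iso_trans HXD (dec2_iso_sym Hg).
have Hs' := chain_iso_reanchor HF Hs I0 I1 E1.
have Ht' := chain_iso_reanchor HF Ht I1 I2 (ltac:(by rewrite /= pcomp_pre)).
by apply/dec_isoP; exists i0, i2; exact: chain_iso_app Hs' Ht'.
Qed.

Lemma glued_reps_cover c : PDn (m + k) f c -> exists2 u, inlist u glued_reps & dec_iso c u.
Proof.
case: c => x y p [[/= Hl Hi] Hn].
have {Hn} Hnc : pnoniso p.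
  case: Hn => // E; exfalso; move: E Hm Hk; case: m => // m'; case: k => //= k'.
  by rewrite addnS.
have [w [p1 [p2 [Ep Hl1]]]] := path_split (p := p) (m := m) (ltac:(by rewrite Hl leq_addr)).
subst p; have [N1 N2] := pnoniso_papp_inv Hnc.
have Hl2 : plen p2 = k by move: Hl; rewrite plen_papp Hl1 => /addnI.
have HX : PD2 f (mkDec2 (pcomp p1) (pcomp p2)).
  split; last split.
  - by rewrite /D2 /= -pcomp_papp.
  - by apply: pcomp_noniso N1 => //; [exact: iso_left_factor | rewrite Hl1].
  - by apply: pcomp_noniso N2 => //; [exact: iso_left_factor | rewrite Hl2].
have [_ _ cover_pd2] := pd2_repsP HE f.
have [D HD HXD] := cover_pd2 _ HX.
have [_ _ cover_fst] := pd_repsP HE (fst2 D) Hm.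
have [_ _ cover_snd] := pd_repsP HE (snd2 D) Hk.
have [a Ha Hpa] := cover_fst (mkDec p1) (conj (conj Hl1 (dec2_iso_fst HXD)) (or_intror N1)).
have [b Hb Hpb] := cover_snd (mkDec p2) (conj (conj Hl2 (dec2_iso_snd HXD)) (or_intror N2)).
exists (glue D a b); first by apply/inlist_glued_reps; exists D, a, b.
exact: glue_of_pieces (And3 HD Ha Hb) HXD Hpa Hpb.
Qed.

Lemma glued_repsP : repr_list (PDn (m + k) f) (@dec_iso C) glued_reps.
Proof. by split; [exact: glued_reps_mem | exact: glued_reps_pw | exact: glued_reps_cover]. Qed.

End FixedLengths.
End Gluing.

Section Weights.
Variables (C : category) (R : comUnitRingType).
Hypothesis HE : ess_finite_decomp C.
Hypothesis HF : iso_filling C.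
Variable al : Arr C -> R.
Hypothesis Hal : cls_fun al.
Hypothesis Hu : forall x : Ob C, al (mkArr (idm x)) \is a GRing.unit.
Implicit Types x y z : Ob C.
Implicit Types f g : Arr C.
Implicit Types d : Dec C.
Implicit Types D : Dec2 C.

Definition inv_id x := (al (mkArr (idm x)))^-1.

Lemma al_idm_iso x y : (exists i : Hom x y, is_iso i) ->
  al (mkArr (idm x)) = al (mkArr (idm y)).
Proof. by move=> H; apply: Hal; exact: arr_iso_idm. Qed.

Lemma inv_id_iso x y : (exists i : Hom x y, is_iso i) -> inv_id x = inv_id y.
Proof. by move=> H; rewrite /inv_id (al_idm_iso H). Qed.

Lemma inv_id_r x : al (mkArr (idm x)) * inv_id x = 1.
Proof. exact: mulrV. Qed.

Lemma inv_id_l x : inv_id x * al (mkArr (idm x)) = 1.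
Proof. exact: mulVr. Qed.

(* weight of a chain, without the leading u_{x_0} *)
Fixpoint chain_weight x y (p : path x y) : R :=
  match p with
  | pnil _ => 1
  | pcons _ y0 _ f q => al (mkArr f) * inv_id y0 * chain_weight q
  end.

Definition dec_weight d := inv_id (dsrc d) * chain_weight (dpath d).

Lemma chain_weight_papp x y z (p : path x y) (q : path y z) :
  chain_weight (papp p q) = chain_weight p * chain_weight q.
Proof. by elim: p q => [a|a b c f p IH] q /=; rewrite ?mul1r // IH !mulrA. Qed.

Lemma chain_weight_iso x y (p : path x y) x' y' (a : Hom x x') e (p' : path x' y') :
  chain_iso p a e p' -> chain_weight p = chain_weight p'.
Proof.
elim: p x' y' a e p' => [x0|x0 y0 z0 f q IH] x' y' a e p'; case: p' a e => //=.
move=> x1 y1 z1 f' q' a e [Ia [b [E H]]].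
rewrite (IH _ _ _ _ _ H) (inv_id_iso (ex_intro _ b (chain_iso_start H))).
by congr (_ * _ * _); apply: Hal; exists a, b; do 2!split=> //; exact: chain_iso_start H.
Qed.

Lemma dec_weight_iso d d' : dec_iso d d' -> dec_weight d = dec_weight d'.
Proof.
case/dec_isoP=> a [e H]; rewrite /dec_weight (chain_weight_iso H).
by rewrite (inv_id_iso (ex_intro _ a (chain_iso_start H))).
Qed.

Lemma chain_weight_pre x y z (h : Hom x y) (p : path y z) :
  (0 < plen p)%N -> is_iso h ->
  chain_weight (pre h p) = al (mkArr (idm y)) * (inv_id y * chain_weight p).
Proof.
case: p h => //= y0 w0 z0 f q h _ Ih.
rewrite mulrA inv_id_r mul1r; congr (_ * _ * _).
by apply: Hal; exact: arr_iso_precomp.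
Qed.

Definition weight_sum n f := \sum_(c <- pd_reps n f) dec_weight c.

Lemma weight_sum_repr n f s : (0 < n)%N -> repr_list (PDn n f) (@dec_iso C) s ->
  weight_sum n f = \sum_(c <- s) dec_weight c.
Proof.
move=> Hn; apply: (repr_sum (@dec_iso_sym C) (@dec_iso_trans C) _ (pd_repsP HE f Hn)).
exact: dec_weight_iso.
Qed.

Lemma weight_sum_arr n f g : (0 < n)%N -> arr_iso f g -> weight_sum n f = weight_sum n g.
Proof.
move=> Hn Hfg; apply: weight_sum_repr => //.
by apply: repr_list_ext (pd_repsP HE g Hn) => d; exact: PDn_arr (arr_iso_sym Hfg).
Qed.

Lemma weight_sum_big n f : (pd_bound HE f < n)%N -> weight_sum n f = 0.
Proof. by move=> H; rewrite /weight_sum pd_reps_big // big_nil. Qed.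

Lemma weight_sum1 f : weight_sum 1 f = inv_id (src f) * al f * inv_id (tgt f).
Proof.
rewrite (weight_sum_repr (ltn0Sn 0) (single_repr f)) big_seq1 /dec_weight /=.
by rewrite mkArr_eta mulr1 mulrA.
Qed.

Lemma dec_weight_glue f m k D a b : (0 < m)%N -> (0 < k)%N ->
  glue_index f m k D a b ->
  dec_weight (glue D a b) = dec_weight a * al (mkArr (idm (e1 D))) * dec_weight b.
Proof.
move=> Hm Hk HDab; have [h [Ih Hg ->]] := glue_spec HE Hm Hk HDab.
have [_ _ /(pd_reps_mem HE Hk) [[Hlb Hib] _]] := HDab.
rewrite /dec_weight /= chain_weight_papp chain_weight_pre ?Hlb //.
by rewrite (al_idm_iso (arr_iso_src Hib)) !mulrA.
Qed.

Lemma weight_sum_glue f m k : (0 < m)%N -> (0 < k)%N ->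
  weight_sum (m + k) f = \sum_(D <- pd2_reps f)
    weight_sum m (fst2 D) * al (mkArr (idm (e1 D))) * weight_sum k (snd2 D).
Proof.
move=> Hm Hk.
rewrite (weight_sum_repr (ltn_addr _ Hm) (glued_repsP HE HF f Hm Hk)).
rewrite /glued_reps big_flatten big_map; apply: eq_big_inlist => D HD.
rewrite big_flatten big_map /weight_sum mulr_suml mulr_suml.
apply: eq_big_inlist => a Ha; rewrite big_flatten big_map mulr_sumr.
apply: eq_big_inlist => b Hb.
by rewrite big_seq1 (dec_weight_glue Hm Hk (And3 HD Ha Hb)).
Qed.

End Weights.

(* The inverse.  β(f) = u_{src f} on isomorphisms and
   β(f) = Σ_{n ≥ 1} (-1)^n W_n(f) otherwise; peeling off the first (last)
   factor of proper decompositions shows α ⋆ β = β ⋆ α = δ. *)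
Section Inverse.
Variables (C : category) (R : comUnitRingType).
Hypothesis HE : ess_finite_decomp C.
Hypothesis HF : iso_filling C.
Variable al : Arr C -> R.
Hypothesis Hal : cls_fun al.
Hypothesis Hu : forall x : Ob C, al (mkArr (idm x)) \is a GRing.unit.
Implicit Types f g : Arr C.
Implicit Types D : Dec2 C.

Local Notation W := (weight_sum al).
Local Notation u := (inv_id al).

Definition beta f : R :=
  if excluded_middle_informative (arr_is_iso f) then u (src f)
  else \sum_(1 <= n < (pd_bound HE f).+1) (-1) ^+ n * W n f.

Lemma beta_iso f : arr_is_iso f -> beta f = u (src f).
Proof. by rewrite /beta; case: excluded_middle_informative. Qed.

Lemma beta_ext f K : ~ arr_is_iso f -> (pd_bound HE f <= K)%N ->
  beta f = \sum_(1 <= n < K.+1) (-1) ^+ n * W n f.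
Proof.
move=> Hf HK; rewrite /beta; case: excluded_middle_informative => // Hf'.
rewrite (@big_cat_nat _ _ _ (pd_bound HE f).+1 1 K.+1) //= -[LHS]addr0.
congr (_ + _); apply/esym; rewrite big_nat_cond; apply: big1 => i /andP [/andP [Hi _] _].
by rewrite weight_sum_big ?mulr0.
Qed.

Lemma beta_cls : cls_fun beta.
Proof.
move=> f g Hfg; case: (classic (arr_is_iso f)) => Hf.
  rewrite !beta_iso //; last exact: arr_iso_is_iso Hfg Hf.
  by apply: inv_id_iso => //; exact: arr_iso_src Hfg.
have Hg : ~ arr_is_iso g by move/(arr_iso_is_iso (arr_iso_sym Hfg)).
rewrite (beta_ext Hf (leq_maxl (pd_bound HE f) (pd_bound HE g))).
rewrite (beta_ext Hg (leq_maxr (pd_bound HE f) (pd_bound HE g))).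
by apply: eq_big_nat => n /andP [Hn _]; rewrite (weight_sum_arr HE Hal Hn Hfg).
Qed.

(* gluing with m = 1 (resp. k = 1) *)
Lemma weight_sum_peel_first f i : (0 < i)%N ->
  W i.+1 f = u (src f) * \sum_(D <- pd2_reps f) al (fst2 D) * W i (snd2 D).
Proof.
move=> Hi; rewrite -add1n (weight_sum_glue HE HF Hal Hu f (ltn0Sn 0) Hi) mulr_sumr.
apply: eq_big_inlist => D /(pd2_reps_noniso HE) [HD2 _ _].
rewrite (weight_sum1 HE Hal) -!mulrA (mulrA (u (e1 D))) (inv_id_l Hu) mul1r.
by congr (_ * _); apply: inv_id_iso => //; exact: arr_iso_src HD2.
Qed.

Lemma weight_sum_peel_last f i : (0 < i)%N ->
  W i.+1 f = (\sum_(D <- pd2_reps f) W i (fst2 D) * al (snd2 D)) * u (tgt f).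
Proof.
move=> Hi; rewrite -addn1 (weight_sum_glue HE HF Hal Hu f Hi (ltn0Sn 0)) mulr_suml.
apply: eq_big_inlist => D /(pd2_reps_noniso HE) [HD2 _ _].
rewrite (weight_sum1 HE Hal) !mulrA -(mulrA _ (al (mkArr (idm (e1 D))))) (inv_id_r Hu) mulr1.
by congr (_ * _); apply: inv_id_iso => //; exact: arr_iso_tgt HD2.
Qed.

(* the recursions for β obtained by summing the peeling identities *)
Lemma beta_peel_first f : ~ arr_is_iso f ->
  beta f = - (u (src f) * al f * u (tgt f))
           - u (src f) * \sum_(D <- pd2_reps f) al (fst2 D) * beta (snd2 D).
Proof.
move=> Hf; set K := maxn (pd_bound HE f) (\max_(D <- pd2_reps f) pd_bound HE (snd2 D)).
rewrite (beta_ext Hf (K := K.+1)); last exact: leq_trans (leq_maxl _ _) (leqnSn _).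
rewrite big_nat_recl // expr1 mulN1r (weight_sum1 HE Hal); congr (_ + _).
rewrite (eq_big_nat _ _ (F2 := fun i => - (u (src f) *
   \sum_(D <- pd2_reps f) al (fst2 D) * ((-1) ^+ i * W i (snd2 D))))); last first.
  move=> i /andP [Hi _]; rewrite weight_sum_peel_first // exprS mulN1r mulNr.
  congr (- _); rewrite mulrCA mulr_sumr; congr (_ * _).
  by apply: eq_big_inlist => D _; rewrite mulrCA.
rewrite sumrN -mulr_sumr exchange_big /=; congr (- (_ * _)).
apply: eq_big_inlist => D HD; rewrite -mulr_sumr; congr (_ * _).
have [_ _ Hs] := pd2_reps_noniso HE HD; rewrite (beta_ext Hs (K := K)) //.
exact: leq_trans (leq_bigmax_inlist (fun E => pd_bound HE (snd2 E)) HD) (leq_maxr _ _).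
Qed.

Lemma beta_peel_last f : ~ arr_is_iso f ->
  beta f = - (u (src f) * al f * u (tgt f))
           - (\sum_(D <- pd2_reps f) beta (fst2 D) * al (snd2 D)) * u (tgt f).
Proof.
move=> Hf; set K := maxn (pd_bound HE f) (\max_(D <- pd2_reps f) pd_bound HE (fst2 D)).
rewrite (beta_ext Hf (K := K.+1)); last exact: leq_trans (leq_maxl _ _) (leqnSn _).
rewrite big_nat_recl // expr1 mulN1r (weight_sum1 HE Hal); congr (_ + _).
rewrite (eq_big_nat _ _ (F2 := fun i => - ((
   \sum_(D <- pd2_reps f) ((-1) ^+ i * W i (fst2 D)) * al (snd2 D)) * u (tgt f)))); last first.
  move=> i /andP [Hi _]; rewrite weight_sum_peel_last // exprS mulN1r mulNr.
  congr (- _); rewrite mulrA mulr_sumr; congr (_ * _).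
  by apply: eq_big_inlist => D _; rewrite mulrA.
rewrite sumrN -mulr_suml exchange_big /=; congr (- (_ * _)).
apply: eq_big_inlist => D HD; rewrite -mulr_suml; congr (_ * _).
have [_ Hs _] := pd2_reps_noniso HE HD; rewrite (beta_ext Hs (K := K)) //.
exact: leq_trans (leq_bigmax_inlist (fun E => pd_bound HE (fst2 E)) HD) (leq_maxr _ _).
Qed.

Lemma beta_right_inverse : conv_is al beta (conv_unit R).
Proof.
apply/(conv_isE HE _ Hal beta_cls) => f.
case: (classic (arr_is_iso f)) => Hf.
  rewrite conv_unit_iso // conv_sum_iso // beta_iso //.
  exact: (esym (inv_id_r Hu _)).
rewrite conv_unit_noniso // conv_sum_noniso // (beta_peel_first Hf).
rewrite beta_iso /=; last exact: iso_idm.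
have := inv_id_r Hu (src f); set a1 := al _ => Ha1.
set S := \sum_(_ <- _) _.
have -> : a1 * (- (u (src f) * al f * u (tgt f)) - u (src f) * S) =
          - ((a1 * u (src f)) * al f * u (tgt f)) - (a1 * u (src f)) * S by ring.
by rewrite Ha1; ring.
Qed.

Lemma beta_left_inverse : conv_is beta al (conv_unit R).
Proof.
apply/(conv_isE HE _ beta_cls Hal) => f.
case: (classic (arr_is_iso f)) => Hf.
  rewrite conv_unit_iso // conv_sum_iso // beta_iso /=; last exact: iso_idm.
  have -> : al f = al (mkArr (idm (src f))).
    apply/esym/Hal; case: f Hf => x y f Hf; exists (idm x), f.
    by split; [exact: iso_idm | split=> //=; rewrite comp_idr comp_idl].
  exact: (esym (inv_id_l Hu _)).
rewrite conv_unit_noniso // conv_sum_noniso // (beta_peel_last Hf).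
rewrite beta_iso /=; last exact: iso_idm.
have := inv_id_l Hu (tgt f); set a1 := al _ => Ha1.
set S := \sum_(_ <- _) _.
have -> : u (src f) * al f + (- (u (src f) * al f * u (tgt f)) - S * u (tgt f)) * a1 + S
   = u (src f) * al f - u (src f) * al f * (u (tgt f) * a1) - S * (u (tgt f) * a1) + S by ring.
by rewrite Ha1; ring.
Qed.

End Inverse.

(* Right inverses are unique: a right inverse b of α is u_{src f} on
   isomorphisms and satisfies a recursion expressing b(f) through the values
   of b on the second factors of proper 2-decompositions of f, whose proper
   decompositions are strictly shorter. *)
Section Uniqueness.
Variables (C : category) (R : comUnitRingType).
Hypothesis HE : ess_finite_decomp C.
Variable al : Arr C -> R.
Hypothesis Hal : cls_fun al.
Hypothesis Hu : forall x : Ob C, al (mkArr (idm x)) \is a GRing.unit.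
Implicit Types f : Arr C.

Local Notation u := (inv_id al).

Lemma PDn_extend_first f D n c : inlist D (pd2_reps f) -> (0 < n)%N ->
  PDn n (snd2 D) c -> exists c', PDn n.+1 f c'.
Proof.
move=> HD Hn Hc.
have [_ _ /(_ c Hc) [b Hb _]] := pd_repsP HE (snd2 D) Hn.
have [_ _ /(_ (single (fst2 D))) [|a Ha _]] := pd_repsP HE (fst2 D) (ltn0Sn 0).
  by have [H _ _] := single_repr (fst2 D); apply: H; left.
exists (glue D a b); rewrite -add1n; apply: (glued_reps_mem HE (ltn0Sn 0) Hn).
by apply/inlist_glued_reps; exists D, a, b.
Qed.

Lemma right_inverse_iso b : conv_is al b (conv_unit R) -> cls_fun b ->
  forall f, arr_is_iso f -> b f = u (src f).
Proof.
move=> H Hb f Hf; have := proj1 (conv_isE HE _ Hal Hb) H f.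
rewrite conv_unit_iso // conv_sum_iso // => E.
by rewrite -[b f]mul1r -(inv_id_l Hu (src f)) -mulrA -E mulr1.
Qed.

Lemma right_inverse_rec b : conv_is al b (conv_unit R) -> cls_fun b ->
  forall f, ~ arr_is_iso f ->
  b f = - (u (src f) * (al f * u (tgt f) +
                        \sum_(D <- pd2_reps f) al (fst2 D) * b (snd2 D))).
Proof.
move=> H Hb f Hf; have := proj1 (conv_isE HE _ Hal Hb) H f.
rewrite conv_unit_noniso // conv_sum_noniso //.
rewrite (right_inverse_iso H Hb (f := mkArr (idm (tgt f)))); last exact: iso_idm.
move/esym/eqP; rewrite -addrA addr_eq0 => /eqP E.
by rewrite -[b f]mul1r -(inv_id_l Hu (src f)) -mulrA E mulrN.
Qed.

Lemma right_inverse_unique b b' : cls_fun b -> cls_fun b' ->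
  conv_is al b (conv_unit R) -> conv_is al b' (conv_unit R) ->
  forall f, b f = b' f.
Proof.
move=> Hb Hb' H H'.
suff HK K f : (forall n d, (0 < n)%N -> PDn n f d -> (n <= K)%N) -> b f = b' f.
  by move=> f; apply: (HK (pd_bound HE f)) => n d; exact: pd_boundP.
elim: K f => [|K IH] f Hbd.
  have [H1 _ _] := single_repr f.
  by have := Hbd 1%N (single f) isT (H1 _ (or_introl erefl)).
case: (classic (arr_is_iso f)) => Hf.
  by rewrite (right_inverse_iso H Hb Hf) (right_inverse_iso H' Hb' Hf).
rewrite (right_inverse_rec H Hb Hf) (right_inverse_rec H' Hb' Hf).
congr (- (_ * (_ + _))); apply: eq_big_inlist => D HD; congr (_ * _).
apply: IH => n c Hn Hc; have [c' Hc'] := PDn_extend_first HD Hn Hc.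
exact: Hbd _ _ (ltn0Sn n) Hc'.
Qed.

End Uniqueness.

(* α is invertible iff every α(1_x) is a unit: an inverse evaluated at 1_x
   inverts α(1_x), and conversely β is a two-sided inverse. *)
Lemma conv_invertibleP (C : category) (R : comUnitRingType) :
  ess_finite_decomp C -> iso_filling C ->
  forall al : Arr C -> R, cls_fun al ->
  conv_invertible al <-> (forall x : Ob C, al (mkArr (idm x)) \is a GRing.unit).
Proof.
move=> HE HF al Hal; split=> [[b [Hb H _]] x|Hu].
  have := proj1 (conv_isE HE _ Hal Hb) H (mkArr (idm x)).
  rewrite conv_unit_iso ?conv_sum_iso; try exact: iso_idm.
  by move=> E; apply/unitrP; exists (b (mkArr (idm x))); rewrite mulrC -E.
exists (beta HE al); split; first exact: beta_cls.
  exact: beta_right_inverse.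
exact: beta_left_inverse.
Qed.

(* for α = 1 every weight is 1, so W_n(f) counts the classes of PD_n(f) *)
Lemma weight_sum_one (C : category) (R : comUnitRingType) n (f : Arr C) :
  weight_sum (fun _ => 1 : R) n f = (size (pd_reps n f))%:R.
Proof.
have chain_one x y (p : path x y) : chain_weight (fun _ => 1 : R) p = 1.
  by elim: p => //= a b c g q ->; rewrite /inv_id invr1 !mulr1.
rewrite /weight_sum /dec_weight; elim: (pd_reps n f) => [|c s IH]; first by rewrite big_nil.
by rewrite big_cons IH chain_one /inv_id invr1 mul1r /= mulrS.
Qed.

Lemma mobius_beta (C : category) (R : comUnitRingType)
    (HE : ess_finite_decomp C) (HF : iso_filling C) (mu : Arr C -> R) :
  conv_inverse (fun _ => 1) mu -> forall f, mu f = beta HE (fun _ => 1) f.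
Proof.
have H1 : cls_fun (fun _ : Arr C => 1 : R) by [].
have Hu1 (x : Ob C) : (1 : R) \is a GRing.unit by exact: unitr1.
case=> Hmu Hr _; apply: (right_inverse_unique HE H1 Hu1 Hmu (beta_cls HE H1) Hr).
exact: beta_right_inverse.
Qed.

Theorem theorem8p3 (C : category) (R : comUnitAlgType rat) :
  ess_finite_decomp C -> iso_filling C ->
  [/\ (forall alpha : Arr C -> R, cls_fun alpha ->
         conv_invertible alpha <->
         (forall x : Ob C, alpha (mkArr (idm x)) \is a GRing.unit)),
      conv_invertible (fun _ : Arr C => 1 : R) &
      forall mu : Arr C -> R, conv_inverse (fun _ : Arr C => 1 : R) mu ->
        (forall f : Arr C, arr_is_iso f -> mu f = 1) /\
        (forall f : Arr C, ~ arr_is_iso f ->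
           exists (N : nat) (k : nat -> nat),
             [/\ forall n, (0 < n)%N -> nclasses (PDn n f) (@dec_iso C) (k n),
                 forall n, (N < n)%N -> k n = 0%N &
                 mu f = \sum_(1 <= n < N.+1) (-1) ^+ n * (k n)%:R])].
Proof.
move=> HE HF; split; first exact: conv_invertibleP.
  by apply/(conv_invertibleP HE HF) => // x; exact: unitr1.
move=> mu Hmu; split=> f Hf; rewrite (mobius_beta HE HF Hmu).
  by rewrite beta_iso // /inv_id invr1.
exists (pd_bound HE f), (fun n => size (pd_reps n f)); split.
- by move=> n Hn; exists (pd_reps n f) => //; exact: pd_repsP.
- by move=> n Hn; rewrite pd_reps_big.
rewrite /beta; case: excluded_middle_informative => // Hf'.
by apply: eq_big_nat => n _; rewrite weight_sum_one.
Qed.
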